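(* Consider the Boston mechanism on a finite set $S$ of students and a finite set $C$ of colleges, as described in the context, and suppose $S=N\sqcup M'$, where students in $N$ (sincere) can only submit their true preference ranking, while students in $M'$ (sophisticated) may submit any ranking. Consider the simultaneous-move game in which each student chooses a submitted ranking from their action set and receives the college assigned by the Boston mechanism, evaluated by their true preferences. Then every sincere student $s\in N$ is assigned the same college (or outside option) in every pure-strategy Nash equilibrium of this game.
   Context: Each student $s$ has a strict true preference order $\succ_s$ over $C\cup\{\emptyset\}$ ($\emptyset$ = unassigned). Each college $c$ has a capacity $q_c\geq 1$ and a strict priority ranking $\succ_c$ over $S$. Each student submits a strict ranking of (a subset of) colleges. The Boston mechanism runs in rounds $k=1,2,\dots$: in round $k$, every student not yet assigned applies to the $k$-th college on their submitted ranking (if any); each college, considering only its round-$k$ applicants, permanently assigns them in order of its priority ranking up to its remaining capacity and rejects the rest; assignments are final. Students never assigned receive $\emptyset$. A pure-strategy Nash equilibrium is a profile of submitted rankings, each in the respective student's action set, such that no student can obtain a strictly better assignment (according to their true preferences) by unilaterally changing to another ranking in their action set. *)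

From mathcomp Require Import all_boot.
Set Implicit Arguments. Unset Strict Implicit. Unset Printing Implicit Defensive.

Section Boston.
Variables (S C : finType).

(* A strict order on a finite type is encoded by an injective rank function:
   x is strictly better than y iff rank x < rank y. *)
Definition strict_rank (T : finType) (r : T -> nat) : Prop := injective r.

(* Preferences of students over C ∪ {∅} (None = unassigned). *)
Variable pref : S -> option C -> nat.
(* Priority ranking of each college over students (smaller = higher priority). *)
Variable prio : C -> S -> nat.
Variable q : C -> nat.

Definition profile := S -> seq C.

(* k-th college (0-indexed) on a submitted list, if any. *)
Definition kth (l : seq C) (k : nat) : option C := onth l k.

Fixpoint boston_round (L : profile) (k : nat) : S -> option C :=
  match k with
  | 0 => fun _ => None
  | k'.+1 =>
    let A := boston_round L k' in
    fun s =>
      match A s with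
      | Some c => Some c
      | None =>
        match kth (L s) k' with
        | None => None
        | Some c =>
          let better := #|[set t | (A t == None) && (kth (L t) k' == Some c)
                                   && (prio c t < prio c s)]| in
          let remaining := q c - #|[set t | A t == Some c]| in
          if better < remaining then Some c else None
        end
      end
  end.

(* Final outcome: after as many rounds as the longest submitted list
   (no student applies anywhere afterwards). *)
Definition boston (L : profile) : S -> option C :=
  boston_round L (\max_(s : S) size (L s)).

Definition true_ranking (s : S) : seq C :=
  sort (fun a b => pref s (Some a) <= pref s (Some b))
       [seq c <- enum C | pref s (Some c) < pref s None].

Definition action (N : {set S}) (s : S) (l : seq C) : Prop :=
  if s \in N then l = true_ranking s else uniq l.

Definition deviate (L : profile) (s : S) (l : seq C) : profile :=
  fun t => if t == s then l else L t.

Definition nash (N : {set S}) (L : profile) : Prop :=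
  (forall s, action N s (L s)) /\
  forall s l, action N s l ->
    ~ (pref s (boston (deviate L s l) s) < pref s (boston L s)).

End Boston.

From mathcomp Require Import all_boot zify.
Set Implicit Arguments. Unset Strict Implicit. Unset Printing Implicit Defensive.

(* Suppose a sincere student s does strictly better in equilibrium L1 than in L2, and
   choose s so that the round k in which s is admitted under L1 is minimal; let c be the
   college s gets.  A sophisticated student who envies a college could rank it first, so in
   equilibrium an envied college is filled in round one by students of higher priority.
   Call a sophisticated student a gainer if L1 is strictly better for her than L2.
   Comparing priorities round by round shows that every college held under L1 by s or by
   a gainer is full under L2, and that everybody who holds such a college under L2 but
   not under L1 is a gainer.  Counting the students moving out of and into these colleges
   gives #gainers + 1 <= #gainers. *)

Lemma card_rank_lt (T : finType) (r : T -> nat) (P : {set T}) m :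
  injective r -> #|[set t in P | #|[set u in P | r u < r t]| < m]| = minn #|P| m.
Proof.
move=> r_inj; have [n] := ubnP #|P|; elim: n P => // n IH P.
have [->|[x0 Px0]] := set_0Vmem P.
  by move=> _; rewrite cards0 min0n; apply/eqP; rewrite cards_eq0;
     apply/eqP/setP => t; rewrite !inE.
(* Remove the r-largest element x: it has all of P :\ x below it, and no other count
   changes. *)
set x := [arg max_(y > x0 in P) r y].
have [Px xmax] : x \in P /\ forall y, y \in P -> r y <= r x.
  by rewrite /x; case: arg_maxnP.
rewrite (cardsD1 x P) Px ltnS => /IH {}IH.
set P' := P :\ x in IH *.
have preds_x : [set u in P | r u < r x] = P'.
  apply/setP => u; rewrite !inE andbC; case Pu: (u \in P); rewrite ?andbF ?andbT //.
  by rewrite ltn_neqAle xmax // andbT (inj_eq r_inj).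
have preds_P' t : t \in P' -> [set v in P | r v < r t] = [set v in P' | r v < r t].
  move=> /setD1P[_ Pt]; apply/setP => v; rewrite !inE.
  by case: eqP => [->|] //=; rewrite Px ltnNge xmax.
have -> : [set t in P | #|[set u in P | r u < r t]| < m] =
   [set t in P' | #|[set u in P' | r u < r t]| < m] :|:
   (if #|P'| < m then [set x] else set0).
  apply/setP => t; case: (t =P x) => [->|tx].
    by rewrite !inE Px preds_x; case: ifP; rewrite ?inE eqxx ?orbT ?orbF.
  have tP' : (t \in P') = (t \in P) by rewrite !inE (introF eqP tx).
  rewrite !inE -tP'.
  have -> : (t \in (if #|P'| < m then [set x] else set0)) = false.
    by case: ifP; rewrite inE // (introF eqP tx).
  rewrite orbF (introF eqP tx) /=.
  by case Pt: (t \in P') => //=; rewrite preds_P'.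
rewrite cardsU IH add1n; case: ifP => lt_m.
  rewrite cards1 (_ : _ :&: _ = set0) ?cards0; first lia.
  by apply/setP => t; rewrite !inE; case: eqP => [->|]; rewrite ?eqxx ?andbF.
by rewrite cards0 setI0 cards0; move/negbT: lt_m; lia.
Qed.

Section BostonRounds.
Variables (S C : finType) (prio : C -> S -> nat) (q : C -> nat).
Hypothesis prio_inj : forall c, injective (prio c).
Arguments prio_inj : clear implicits.
Local Notation A := (boston_round prio q).
Local Notation mu := (boston prio q).
Implicit Types (L : profile S C) (s t u : S) (c : C).

Definition seats_taken L k c := #|[set t | A L k t == Some c]|.

Definition applicants L k c :=
  [set t | (A L k t == None) && (kth (L t) k == Some c)].

Lemma boston_round_applicant L k s c : A L k s = None -> kth (L s) k = Some c ->
  A L k.+1 s = if #|[set u in applicants L k c | prio c u < prio c s]|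
                  < q c - seats_taken L k c then Some c else None.
Proof.
move=> /= -> ->; rewrite -/(seats_taken L k c).
have -> // : [set t | (A L k t == None) && (kth (L t) k == Some c)
                      && (prio c t < prio c s)]
           = [set u in applicants L k c | prio c u < prio c s].
by apply/setP => t; rewrite !inE.
Qed.

Lemma boston_round_kept L k s c : A L k s = Some c -> A L k.+1 s = Some c.
Proof. by move=> /= ->. Qed.

Lemma boston_round_mono L k k' s c : k <= k' -> A L k s = Some c -> A L k' s = Some c.
Proof.
move=> /subnKC <- Akc; elim: (k' - k) => [|n IH]; first by rewrite addn0.
by rewrite addnS; apply: boston_round_kept.
Qed.

Lemma boston_round_applied L k s c :
  A L k s = None -> A L k.+1 s = Some c -> kth (L s) k = Some c.
Proof. by move=> /= ->; case: kth => // c'; case: ifP => // _ [<-]. Qed.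

Lemma boston_round_admission L j s c : A L j s = Some c ->
  exists2 k, k < j & A L k s = None /\ A L k.+1 s = Some c.
Proof.
elim: j => [//|j IH] Ajc; case Aj: (A L j s) => [c'|]; last by exists j.
move: Ajc; rewrite (boston_round_kept Aj) => -[c'c]; rewrite c'c in Aj.
by have [k lt_kj Ak] := IH Aj; exists k => //; apply: ltnW.
Qed.

Lemma seats_taken0 L c : seats_taken L 0 c = 0.
Proof. by apply/eqP; rewrite cards_eq0; apply/eqP/setP => t; rewrite !inE. Qed.

Lemma seats_takenS L k c : seats_taken L k.+1 c =
  seats_taken L k c + minn #|applicants L k c| (q c - seats_taken L k c).
Proof.
rewrite -(card_rank_lt _ _ (prio_inj c)) {1}/seats_taken.
set adm := [set t in applicants L k c | _].
have -> : [set t | A L k.+1 t == Some c] = [set t | A L k t == Some c] :|: adm.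
  apply/setP => t; rewrite !inE.
  case At: (A L k t) => [c'|]; first by rewrite (boston_round_kept At) orbF.
  case Lt: (kth (L t) k) => [c'|]; last by rewrite /= At Lt.
  rewrite (boston_round_applicant At Lt) /=.
  have [<-|ne] := eqVneq c' c; first by case: ifP; rewrite ?eqxx.
  have ne' : (Some c' == Some c) = false by apply: contraNF ne => /eqP[->].
  by case: ifP; rewrite ne'.
rewrite cardsU (_ : _ :&: _ = set0) ?cards0 ?subn0 //.
by apply/setP => t; rewrite !inE; case: (A L k t) => //= c'; rewrite andbF.
Qed.

Lemma seats_taken_le L k c : seats_taken L k c <= q c.
Proof. by elim: k => [|k IH]; rewrite ?seats_taken0 // seats_takenS; lia. Qed.

Lemma seats_taken_mono L k k' c : k <= k' -> seats_taken L k c <= seats_taken L k' c.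
Proof.
move=> le_kk'; apply/subset_leq_card/subsetP => t; rewrite !inE.
by move/eqP/(boston_round_mono le_kk')/eqP.
Qed.

Lemma full_stays_full L k k' c :
  k <= k' -> seats_taken L k c = q c -> seats_taken L k' c = q c.
Proof. by move=> /(seats_taken_mono L c); have := seats_taken_le L k' c; lia. Qed.

Lemma full_of_rejected L k t c : A L k t = None -> kth (L t) k = Some c ->
  A L k.+1 t = None -> seats_taken L k.+1 c = q c.
Proof.
move=> At Lt; rewrite (boston_round_applicant At Lt); case: ifP => // /negbT.
rewrite -leqNgt => le_q _.
have t_app : t \in applicants L k c by rewrite inE At Lt !eqxx.
have : [set u in applicants L k c | prio c u < prio c t] \subset applicants L k c :\ t.
  apply/subsetP => u; rewrite !inE => /andP[-> lt_ut]; rewrite andbT.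
  by apply: contraTneq lt_ut => ->; rewrite ltnn.
move/subset_leq_card; have := cardsD1 t (applicants L k c); rewrite t_app seats_takenS.
by have := seats_taken_le L k c; lia.
Qed.

Lemma not_admitted_when_full L k t c : seats_taken L k c = q c ->
  A L k t = None -> A L k.+1 t <> Some c.
Proof.
move=> full At Akt; have Lt := boston_round_applied At Akt.
by move: Akt; rewrite (boston_round_applicant At Lt) full subnn ltn0.
Qed.

Lemma prio_lt_of_admitted_rejected L k t u c :
  A L k t = None -> A L k u = None -> kth (L t) k = Some c -> kth (L u) k = Some c ->
  A L k.+1 t = Some c -> A L k.+1 u = None -> prio c t < prio c u.
Proof.
move=> At Au Lt Lu; rewrite (boston_round_applicant At Lt) (boston_round_applicant Au Lu).
case: ifP => // adm_t _; case: ifP => // /negbT; rewrite -leqNgt => rej_u _.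
rewrite ltnNge; apply/negP => le_ut; move: adm_t; apply/negP; rewrite -leqNgt.
apply: leq_trans rej_u _; apply/subset_leq_card/subsetP => w; rewrite !inE.
by case/andP => -> lt_wu; apply: leq_trans le_ut.
Qed.

Definition last_round L := \max_(s : S) size (L s).

Lemma boston_roundE L k s : last_round L <= k -> A L k s = mu L s.
Proof.
move=> /subnKC <-; elim: (k - last_round L) => [|n IH]; first by rewrite addn0.
rewrite addnS /= IH; case: (mu L s) => // .
by rewrite /kth onth_default //; exact: leq_trans (leq_bigmax s) (leq_addr _ _).
Qed.

Lemma boston_of_round L k s c : A L k s = Some c -> mu L s = Some c.
Proof.
move=> Akc; have [le_k|lt_k] := leqP k (last_round L).
  by rewrite -(boston_roundE s (leqnn _)); apply: boston_round_mono Akc.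
by rewrite -(boston_roundE s (ltnW lt_k)).
Qed.

Lemma boston_admission L s c : mu L s = Some c ->
  exists k, A L k s = None /\ A L k.+1 s = Some c.
Proof. by case/boston_round_admission => k _; exists k. Qed.

Lemma boston_admitted_before_full L j u c :
  seats_taken L j c = q c -> mu L u = Some c -> A L j u = Some c.
Proof.
move=> full /boston_admission[k [Ak Ak1]].
have [le_jk|lt_kj] := leqP j k; last exact: boston_round_mono Ak1.
by case: (not_admitted_when_full (full_stays_full le_jk full) Ak Ak1).
Qed.

Lemma card_boston L k c :
  last_round L <= k -> #|[set t | mu L t == Some c]| = seats_taken L k c.
Proof.
by move=> le_k; rewrite /seats_taken; apply: eq_card => t; rewrite !inE boston_roundE.
Qed.

Lemma card_boston_full L j c :
  seats_taken L j c = q c -> #|[set t | mu L t == Some c]| = q c.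
Proof.
rewrite (card_boston c (leq_maxr j (last_round L))).
exact: full_stays_full (leq_maxl _ _).
Qed.

Lemma card_boston_le L c : #|[set t | mu L t == Some c]| <= q c.
Proof. by rewrite (card_boston c (leqnn _)) seats_taken_le. Qed.

End BostonRounds.

Lemma card_preim_partition (T J : finType) (P : pred T) (h : T -> J) (D : {set J}) :
  #|[set u | P u && (h u \in D)]| = \sum_(o in D) #|[set u | P u && (h u == o)]|.
Proof.
rewrite -sum1_card (partition_big h (fun o => o \in D)) => [|u]; last first.
  by rewrite inE => /andP[].
apply: eq_bigr => o oD; rewrite -sum1_card; apply: eq_bigl => u; rewrite !inE.
by case: (h u =P o) => [->|]; rewrite ?oD ?andbT ?andbF.
Qed.

Lemma card_changed_from_le_changed_to (T J : finType) (f g : T -> J) (D : {set J}) :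
  (forall o, o \in D -> #|[set u | f u == o]| <= #|[set u | g u == o]|) ->
  #|[set u | (f u != g u) && (f u \in D)]| <= #|[set u | (f u != g u) && (g u \in D)]|.
Proof.
move=> le_fg; rewrite !card_preim_partition; apply: leq_sum => o /le_fg.
have split_preim (h : T -> J) : h = f \/ h = g -> #|[set u | h u == o]| =
    #|[set u | (f u != g u) && (h u == o)]| + #|[set u | (f u == o) && (g u == o)]|.
  move=> hfg; rewrite -(cardsID [set u | (f u == o) && (g u == o)]) addnC.
  congr (_ + _); apply: eq_card => u; rewrite !inE.
    case: hfg => ->; case: (f u =P o) => [->|/eqP/negbTE fo];
      case: (g u =P o) => [->|/eqP/negbTE go];
      by rewrite ?eqxx //= ?andbT ?andbF ?(eq_sym o) ?fo ?go.
  by case: hfg => ->; case: (f u == o); case: (g u == o).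
rewrite (split_preim f) ?(split_preim g); [|by right|by left].
by rewrite leq_add2r.
Qed.

Section Equilibrium.
Variables (S C : finType) (pref : S -> option C -> nat) (prio : C -> S -> nat) (q : C -> nat).
Variable N : {set S}.
Hypothesis pref_inj : forall s, injective (pref s).
Hypothesis prio_inj : forall c, injective (prio c).
Arguments prio_inj : clear implicits.
Local Notation A := (boston_round prio q).
Local Notation mu := (boston prio q).
Local Notation nash := (nash pref prio q N).
Implicit Types (L : profile S C) (s t u : S) (c d : C).

Lemma true_ranking_pref_le s i j a b : i <= j ->
  kth (true_ranking pref s) i = Some a -> kth (true_ranking pref s) j = Some b ->
  pref s (Some a) <= pref s (Some b).
Proof.
move=> le_ij Ra Rb; have lt_size n x : kth (true_ranking pref s) n = Some x ->
    n \in [pred n | n < size (true_ranking pref s)].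
  by rewrite inE -onthTE /kth => ->.
rewrite -(@onth_nth _ a a _ _ Ra) -(@onth_nth _ a b _ _ Rb).
apply: (@sorted_leq_nth _ (fun x y => pref s (Some x) <= pref s (Some y)));
  rewrite ?(lt_size _ _ Ra) ?(lt_size _ _ Rb) //.
- by move=> x y z; apply: leq_trans.
- by apply: sort_sorted => x y; apply: leq_total.
Qed.

Lemma true_ranking_acceptable s i a :
  kth (true_ranking pref s) i = Some a -> pref s (Some a) < pref s None.
Proof.
move=> Ra; have : a \in true_ranking pref s by apply/onthP; exists i.
by rewrite mem_sort mem_filter => /andP[].
Qed.

Lemma nash_sincere L s : nash L -> s \in N -> L s = true_ranking pref s.
Proof. by case=> act _ sN; have := act s; rewrite /action sN. Qed.

Lemma nash_acceptable L s : nash L -> pref s (mu L s) <= pref s None.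
Proof.
move=> eqL; have [sN|sN] := boolP (s \in N).
  case mus: (mu L s) => [c|//]; have [k [Ak Ak1]] := boston_admission mus.
  move: (boston_round_applied Ak Ak1); rewrite (nash_sincere eqL sN).
  by move/true_ranking_acceptable/ltnW.
have muE : mu (deviate L s [::]) s = None.
  rewrite /boston; elim: (\max_(t : S) _) => [//|k /= ->].
  by rewrite /deviate eqxx /kth onth0n.
case: eqL => _ /(_ s [::]); rewrite /action (negbTE sN) muE => /(_ isT).
by move=> not_lt; rewrite leqNgt; apply/negP.
Qed.

Lemma nash_envy L m c : nash L -> m \notin N -> pref m (Some c) < pref m (mu L m) ->
  seats_taken prio q L 1 c = q c /\ forall w, mu L w = Some c -> prio c w < prio c m.
Proof.
(* Deviating to [:: c] must not get m into c, so c already rejects m in round one. *)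
move=> eqL mN envy; set L' := deviate L m [:: c].
have not_adm : A L' 1 m <> Some c.
  move/boston_of_round => mu'; case: eqL => _ /(_ m [:: c]).
  by rewrite /action (negbTE mN) mu' => /(_ isT).
have Lm : kth (L' m) 0 = Some c by rewrite /L' /deviate eqxx.
move: not_adm; rewrite (boston_round_applicant (erefl : A L' 0 m = None) Lm).
rewrite seats_taken0 subn0; case: ifP => // /negbT; rewrite -leqNgt => q_le _.
set ahead := [set u in applicants prio q L 0 c | prio c u < prio c m].
have q_ahead : q c <= #|ahead|.
  apply: leq_trans q_le _; apply/subset_leq_card/subsetP => u; rewrite !inE.
  case/andP => /andP[_ Lu] lt_um; rewrite lt_um andbT.
  by move: Lu; rewrite /L' /deviate; case: (u =P m) => // eq_um; rewrite eq_um ltnn in lt_um.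
have full1 : seats_taken prio q L 1 c = q c.
  rewrite seats_takenS // seats_taken0 subn0 add0n.
  have : #|ahead| <= #|applicants prio q L 0 c|.
    by apply/subset_leq_card/subsetP => u; rewrite inE => /andP[].
  lia.
split=> // w /(boston_admitted_before_full prio_inj full1) Aw.
have Lw := boston_round_applied (erefl : A L 0 w = None) Aw.
move: Aw; rewrite (boston_round_applicant (erefl : A L 0 w = None) Lw) seats_taken0 subn0.
case: ifP => // lt_q _; rewrite ltnNge; apply/negP => le_mw.
have : #|ahead| <= #|[set u in applicants prio q L 0 c | prio c u < prio c w]|.
  apply/subset_leq_card/subsetP => u; rewrite !inE => /andP[-> lt_um].
  exact: leq_trans lt_um le_mw.
lia.
Qed.

Lemma sincere_rejected L u j c : nash L -> u \in N ->
  kth (true_ranking pref u) j = Some c -> pref u (Some c) < pref u (mu L u) ->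
  A L j u = None /\ A L j.+1 u = None.
Proof.
move=> eqL uN Rj worse; have Lu := nash_sincere eqL uN.
have Aj : A L j u = None.
  case Aj: (A L j u) => [e|//]; have [i lt_ij [Ai Ai1]] := boston_round_admission Aj.
  have Ri : kth (true_ranking pref u) i = Some e.
    by rewrite -Lu; exact: boston_round_applied Ai Ai1.
  have := true_ranking_pref_le (ltnW lt_ij) Ri Rj.
  by rewrite (boston_of_round Aj) in worse; lia.
split=> //; case Aj1: (A L j.+1 u) => [e|//].
have := boston_round_applied Aj Aj1; rewrite Lu Rj => -[ce].
by rewrite (boston_of_round Aj1) -ce ltnn in worse.
Qed.

Section MinimalCounterexample.
Variables L1 L2 : profile S C.
Hypotheses (eqL1 : nash L1) (eqL2 : nash L2).
Local Notation better t := (pref t (mu L1 t) < pref t (mu L2 t)).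

Lemma better_assigned t : better t -> exists d, mu L1 t = Some d.
Proof.
case mu1: (mu L1 t) => [d|] better_t; first by exists d.
by have := nash_acceptable t eqL2; lia.
Qed.

Lemma worse_of_not_better t :
  mu L1 t != mu L2 t -> ~~ better t -> pref t (mu L2 t) < pref t (mu L1 t).
Proof.
move=> moved; rewrite -leqNgt leq_eqVlt => /orP[/eqP/pref_inj eq_mu|//].
by rewrite eq_mu eqxx in moved.
Qed.

Definition gainers := [set t | (t \notin N) && better t].

Lemma moved_to_envied_gainer z u :
  z \in gainers -> mu L2 u = mu L1 z -> mu L1 u != mu L2 u -> u \in gainers.
Proof.
rewrite inE => /andP[zN z_better] mu2_u moved.
have [d mu1_z] := better_assigned z_better; rewrite mu1_z in mu2_u z_better.
have [full2 ahead2] := nash_envy eqL2 zN z_better.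
have lt_uz := ahead2 u mu2_u.
have [uN|uN] := boolP (u \in N); last first.
  rewrite inE uN /=; apply/negPn/negP => not_better.
  have := worse_of_not_better moved not_better; rewrite mu2_u => envy.
  have [_ ahead1] := nash_envy eqL1 uN envy.
  by have := ahead1 z mu1_z; lia.
exfalso; have A2u := boston_admitted_before_full prio_inj full2 mu2_u.
have kth1_u : kth (L1 u) 0 = Some d.
  rewrite (nash_sincere eqL1 uN) -(nash_sincere eqL2 uN).
  exact: boston_round_applied (erefl : A L2 0 u = None) A2u.
have A1u : A L1 1 u = None.
  case A1u: (A L1 1 u) => [e|//].
  have := boston_round_applied (erefl : A L1 0 u = None) A1u; rewrite kth1_u => -[de].
  by move: moved; rewrite (boston_of_round A1u) mu2_u -de eqxx.
have full1 := full_of_rejected prio_inj (erefl : A L1 0 u = None) kth1_u A1u.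
have A1z := boston_admitted_before_full prio_inj full1 mu1_z.
have kth1_z := boston_round_applied (erefl : A L1 0 z = None) A1z.
have := prio_lt_of_admitted_rejected (erefl : A L1 0 z = None) (erefl : A L1 0 u = None)
  kth1_z kth1_u A1z A1u.
lia.
Qed.

Variables (s : S) (k : nat) (c : C).
Hypotheses (sN : s \in N) (s_better : better s).
Hypotheses (s_unassigned : A L1 k s = None) (s_admitted : A L1 k.+1 s = Some c).
Hypothesis k_min : forall t j d, t \in N -> better t ->
  A L1 j t = None -> A L1 j.+1 t = Some d -> k <= j.

Let mu1_s : mu L1 s = Some c := boston_of_round s_admitted.
Let kth1_s : kth (L1 s) k = Some c := boston_round_applied s_unassigned s_admitted.

Let kth2_s : kth (L2 s) k = Some c.
Proof. by rewrite (nash_sincere eqL2 sN) -(nash_sincere eqL1 sN). Qed.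

Let s_rejected2 : A L2 k s = None /\ A L2 k.+1 s = None.
Proof.
apply: (sincere_rejected eqL2 sN (_ : _ = Some c)); first by rewrite -(nash_sincere eqL1 sN).
by rewrite -mu1_s.
Qed.

Let c_full2 : seats_taken prio q L2 k.+1 c = q c.
Proof.
by case: s_rejected2 => s_rej s_rej'; apply: (full_of_rejected prio_inj s_rej kth2_s s_rej').
Qed.

Let admitted_to_c_by_k u : mu L2 u = Some c ->
  exists2 j, j <= k & [/\ A L2 j u = None, A L2 j.+1 u = Some c & kth (L2 u) j = Some c].
Proof.
move=> mu2_u; have [j [A2j A2j1]] := boston_admission mu2_u.
exists j; last by split=> //; apply: boston_round_applied A2j A2j1.
rewrite leqNgt; apply/negP => lt_kj.
have := boston_round_mono lt_kj (boston_admitted_before_full prio_inj c_full2 mu2_u).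
by rewrite A2j.
Qed.

Lemma sincere_stays_at_c u : u \in N -> mu L2 u = Some c -> mu L1 u = Some c.
Proof.
move=> uN mu2_u; apply/eqP/negPn/negP; rewrite -mu2_u => moved.
have [j le_jk [A2j A2j1 kth2_u]] := admitted_to_c_by_k mu2_u.
have [s_rej2 s_rej2'] := s_rejected2.
have Rj : kth (true_ranking pref u) j = Some c by rewrite -(nash_sincere eqL2 uN).
have [u_better|not_better] := boolP (better u).
  have [c' mu1_u] := better_assigned u_better.
  have [j' [A1j' A1j'1]] := boston_admission mu1_u.
  have Rj' : kth (true_ranking pref u) j' = Some c'.
    by rewrite -(nash_sincere eqL1 uN); apply: boston_round_applied A1j' A1j'1.
  have := true_ranking_pref_le (leq_trans le_jk (k_min uN u_better A1j' A1j'1)) Rj Rj'.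
  by rewrite mu1_u mu2_u in u_better; lia.
have := worse_of_not_better moved not_better; rewrite mu2_u => worse.
have [A1j A1j1] := sincere_rejected eqL1 uN Rj worse.
have kth1_u : kth (L1 u) j = Some c by rewrite (nash_sincere eqL1 uN).
have full1 := full_of_rejected prio_inj A1j kth1_u A1j1.
move: le_jk; rewrite leq_eqVlt => /orP[/eqP ejk|lt_jk]; last first.
  exact: not_admitted_when_full (full_stays_full prio_inj lt_jk full1) s_unassigned s_admitted.
rewrite ejk in A1j A1j1 kth1_u A2j A2j1 kth2_u.
have := prio_lt_of_admitted_rejected s_unassigned A1j kth1_s kth1_u s_admitted A1j1.
have := prio_lt_of_admitted_rejected A2j s_rej2 kth2_u kth2_s A2j1 s_rej2'.
lia.
Qed.

Lemma sophisticated_moved_to_c_better u : u \notin N ->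
  mu L2 u = Some c -> mu L1 u != mu L2 u -> better u.
Proof.
move=> uN mu2_u moved; apply/negPn/negP => not_better.
have [j le_jk [A2j A2j1 kth2_u]] := admitted_to_c_by_k mu2_u.
have [s_rej2 s_rej2'] := s_rejected2.
have := worse_of_not_better moved not_better; rewrite mu2_u => envy.
have [full1 ahead] := nash_envy eqL1 uN envy.
have A1s := boston_admitted_before_full prio_inj full1 mu1_s.
have ejk : j = k.
  case: (posnP k) => [k0|k_pos]; first by move: le_jk; rewrite k0 leqn0 => /eqP.
  by move: s_unassigned; rewrite (boston_round_mono k_pos A1s).
rewrite ejk in A2j A2j1 kth2_u.
have := prio_lt_of_admitted_rejected A2j s_rej2 kth2_u kth2_s A2j1 s_rej2'.
by have := ahead s mu1_s; lia.
Qed.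

Lemma gainer_envied_full z : z \in s |: gainers ->
  exists d, mu L1 z = Some d /\ #|[set t | mu L2 t == Some d]| = q d.
Proof.
case/setU1P => [->|].
  by exists c; split; last exact: card_boston_full prio_inj _ _ _ c_full2.
rewrite inE => /andP[zN z_better]; have [d mu1_z] := better_assigned z_better.
exists d; split=> //; rewrite mu1_z in z_better.
have [full2 _] := nash_envy eqL2 zN z_better.
exact: card_boston_full prio_inj _ _ _ full2.
Qed.

Lemma minimal_counterexample_absurd : False.
Proof.
set Z := s |: gainers; set D := [set mu L1 z | z in Z].
have Z_better z : z \in Z -> better z.
  by case/setU1P => [->|]; last rewrite inE => /andP[].
have cap_D o : o \in D -> #|[set u | mu L1 u == o]| <= #|[set u | mu L2 u == o]|.
  case/imsetP => z /gainer_envied_full[d [-> full]] ->.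
  by rewrite full card_boston_le.
have Z_le : #|Z| <= #|[set u | (mu L1 u != mu L2 u) && (mu L1 u \in D)]|.
  apply/subset_leq_card/subsetP => z zZ; rewrite inE imset_f // andbT.
  by apply: contraTneq (Z_better z zZ) => ->; rewrite ltnn.
have le_gainers : #|[set u | (mu L1 u != mu L2 u) && (mu L2 u \in D)]| <= #|gainers|.
  apply/subset_leq_card/subsetP => u; rewrite inE => /andP[moved /imsetP[z zZ mu2_u]].
  case/setU1P: zZ mu2_u => [-> mu2_u|zY mu2_u]; last first.
    exact: moved_to_envied_gainer zY mu2_u moved.
  rewrite mu1_s in mu2_u; rewrite inE.
  have [uN|uN] := boolP (u \in N); last exact: sophisticated_moved_to_c_better.
  by move: moved; rewrite sincere_stays_at_c // mu2_u eqxx.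
have card_Z : #|Z| = #|gainers|.+1 by rewrite cardsU1 inE sN.
have := leq_trans Z_le (leq_trans (card_changed_from_le_changed_to cap_D) le_gainers).
by rewrite card_Z ltnn.
Qed.

End MinimalCounterexample.

Lemma sincere_not_better L1 L2 s : nash L1 -> nash L2 -> s \in N ->
  pref s (mu L2 s) <= pref s (mu L1 s).
Proof.
move=> eqL1 eqL2 sN; rewrite leqNgt; apply/negP => s_better.
pose better t := pref t (mu L1 t) < pref t (mu L2 t).
have ex_round : exists k,
    [exists t, [&& t \in N, better t, A L1 k t == None & A L1 k.+1 t != None]].
  have [c mu1_s] := better_assigned eqL2 s_better.
  have [k [Ak Ak1]] := boston_admission mu1_s.
  by exists k; apply/existsP; exists s; rewrite sN /better s_better Ak Ak1.
have [k /existsP[t /and4P[tN t_better /eqP Ak]]] := ex_minnP ex_round.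
case Ak1: (A L1 k.+1 t) => [c|//] _ k_min.
apply: (minimal_counterexample_absurd eqL1 eqL2 tN t_better Ak Ak1).
move=> u j d uN u_better Aj Aj1.
by apply: k_min; apply/existsP; exists u; rewrite uN /better u_better Aj Aj1.
Qed.

Lemma nash_sincere_boston_eq L1 L2 s : nash L1 -> nash L2 -> s \in N -> mu L1 s = mu L2 s.
Proof.
move=> eqL1 eqL2 sN; apply: (@pref_inj s); apply/eqP.
by rewrite eqn_leq (sincere_not_better eqL1 eqL2 sN) (sincere_not_better eqL2 eqL1 sN).
Qed.

End Equilibrium.

Theorem mainTheorem8 (S C : finType)
    (pref : S -> option C -> nat) (prio : C -> S -> nat) (q : C -> nat)
    (Hpref : forall s, strict_rank (pref s))
    (Hprio : forall c, strict_rank (prio c))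
    (Hq : forall c, 0 < q c)
    (N : {set S}) (L1 L2 : profile S C) :
  nash pref prio q N L1 -> nash pref prio q N L2 ->
  forall s, s \in N -> boston prio q L1 s = boston prio q L2 s.
Proof. by move=> eqL1 eqL2 s; apply: (nash_sincere_boston_eq Hpref Hprio). Qed.
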